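(* Let $m$ be an odd positive integer and let $a,d_1,d_2\in\mathbb{Z}/m\mathbb{Z}$ be such that $d_1$, $d_2$ and $d_2-d_1$ are all invertible. Then the arithmetic triangle $\mathrm{AT}(a,d_1,d_2,n)$ is balanced for all non-negative integers $n\equiv0$ or $n\equiv-1\pmod m$.
   Context: The arithmetic triangle $\mathrm{AT}(a,d_1,d_2,n)$ is the family $(a+id_2+jd_1)_{(i,j)\in\mathbb{N}^2,\,i+j<n}$ of elements of $\mathbb{Z}/m\mathbb{Z}$. It is balanced if every element of $\mathbb{Z}/m\mathbb{Z}$ occurs the same number of times in it. *)

(* Elements of Z/mZ are represented by integers, compared modulo m. *)
From mathcomp Require Import all_boot all_order all_algebra.
Set Implicit Arguments. Unset Strict Implicit. Unset Printing Implicit Defensive.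
Import Order.TTheory GRing.Theory Num.Theory.
Local Open Scope ring_scope.

Definition AT_count (m : nat) (a d1 d2 : int) (n : nat) (x : int) : nat :=
  (\sum_(i < n) \sum_(j < n - i)
     ((a + (i%:Z) * d2 + (j%:Z) * d1 == x %[mod (m%:Z)])%Z : nat))%N.

Definition AT_balanced (m : nat) (a d1 d2 : int) (n : nat) : Prop :=
  forall x y : int, AT_count m a d1 d2 n x = AT_count m a d1 d2 n y.

(* The entries of a row, a column or an antidiagonal of the triangle form arithmetic
   progressions of steps d1, d2 and d2 - d1, so any m consecutive entries of one of them
   meet every residue class exactly once.  Shifting the triangle by m rows and m columns
   thus gives N(n + 2m, x) + N(n, x) = 2 N(n + m, x) + m for the number N(n, x) of
   entries equal to x, which reduces the claim to n = 0 and n = m; and going from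
   n = km - 1 to n = km adds an antidiagonal of length km, meeting every residue k times.
   For n = m: the cells of the m x m square with value x meet every row, column and
   broken diagonal (i + j mod m constant) once, so summing i + j over them gives
   2(0 + ... + m - 1) while summing (i + j) mod m gives 0 + ... + m - 1.  The difference
   is m times the number of such cells with i + j >= m, which is therefore independent
   of x, and so is N(m, x). *)

From mathcomp Require Import all_boot all_order all_algebra.
From mathcomp Require Import zify ring.
Set Implicit Arguments. Unset Strict Implicit. Unset Printing Implicit Defensive.
Import Order.TTheory GRing.Theory Num.Theory.
Local Open Scope ring_scope.

Definition ap_count (m : nat) (c u x : int) (L : nat) : nat :=
  (\sum_(k < L) ((c + k%:Z * u == x %[mod m%:Z])%Z : nat))%N.

Lemma eqz_mod_ap_addm m c u x k :
  (c + (m + k)%:Z * u == x %[mod m%:Z])%Z = (c + k%:Z * u == x %[mod m%:Z])%Z.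
Proof.
have -> : c + (m + k)%:Z * u = u * m%:Z + (c + k%:Z * u) by rewrite PoszD; ring.
by rewrite /= modzMDl.
Qed.

Section ArithmeticProgression.

Variables (m : nat) (c u x : int).
Hypotheses (m_gt0 : (0 < m)%N) (u_coprime : coprimez u m).

Lemma ap_count_period : ap_count m c u x m = 1%N.
Proof.
have mod_lt z : (absz (z %% m%:Z)%Z < m)%N by lia.
pose res (k : 'I_m) : 'I_m := Ordinal (mod_lt (c + k%:Z * u)).
have res_inj : injective res.
  move=> k1 k2 /(congr1 val) /= eq_res.
  have : (c + k1%:Z * u == c + k2%:Z * u %[mod m%:Z])%Z by apply/eqP; lia.
  rewrite eqz_modDl eqz_mod_dvd -mulrBl Gauss_dvdzl; last by rewrite coprimez_sym.
  rewrite -eqz_mod_dvd !modz_small ?lez_nat ?ltz_nat ?ltn_ord //.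
  by move=> /eqP [] eq_k; apply: val_inj.
pose xm : 'I_m := Ordinal (mod_lt x).
transitivity (\sum_(k < m) (res k == xm) : nat)%N.
  apply: eq_bigr => k _; congr nat_of_bool.
  by rewrite -(inj_eq val_inj) /=; apply/eqP/eqP; lia.
rewrite -(@reindex_inj _ _ _ _ res xpredT (fun k => (k == xm) : nat)) //=.
by rewrite (bigD1 xm) //= eqxx big1 // => k /negbTE ->.
Qed.

Lemma ap_count_addm L : ap_count m c u x (m + L) = (ap_count m c u x L).+1.
Proof.
rewrite /ap_count big_split_ord /= -/(ap_count m c u x m) ap_count_period //.
by congr S; apply: eq_bigr => k _; rewrite eqz_mod_ap_addm.
Qed.

Lemma ap_count_mulm p : ap_count m c u x (p * m) = p.
Proof. by elim: p => [|p IHp]; rewrite ?mulSn ?ap_count_addm ?IHp // /ap_count big_ord0. Qed.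

End ArithmeticProgression.

Lemma big_ord_rotmod (R : Type) (idx : R) (op : Monoid.com_law idx) (m i : nat)
    (F : nat -> R) :
  (0 < m)%N -> \big[op/idx]_(j < m) F ((i + j) %% m)%N = \big[op/idx]_(k < m) F k.
Proof.
move=> m_gt0; pose rot (j : 'I_m) : 'I_m := Ordinal (ltn_pmod (i + j) m_gt0).
have rot_inj : injective rot.
  move=> j1 j2 /(congr1 val) /= /eqP; rewrite eqn_modDl !modn_small // => /eqP.
  exact: val_inj.
by rewrite (@reindex_inj _ _ _ _ rot xpredT (fun k : 'I_m => F k)).
Qed.

Section Triangle.

Variables (m : nat) (a d1 d2 : int).
Hypotheses (m_gt0 : (0 < m)%N) (d1_coprime : coprimez d1 m) (d2_coprime : coprimez d2 m)
           (diff_coprime : coprimez (d2 - d1) m).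

Local Notation N := (AT_count m a d1 d2).
Local Notation row i := (ap_count m (a + i%:Z * d2) d1).
Local Notation balanced := (AT_balanced m a d1 d2).

Lemma AT_countE n x : N n x = (\sum_(i < n) row i x (n - i))%N.
Proof. by []. Qed.

Lemma AT_count_addm n x : N (m + n) x = (\sum_(i < m) row i x (m + n - i) + N n x)%N.
Proof.
rewrite !AT_countE big_split_ord /=; congr (_ + _)%N.
apply: eq_bigr => i _; rewrite subnDl; apply: eq_bigr => j _.
by rewrite -addrA (addrC (_ * d2)) addrA eqz_mod_ap_addm -addrA (addrC (_ * d1)) addrA.
Qed.

Lemma AT_count_succ n x :
  N n.+1 x =
  (N n x + \sum_(i < n.+1) ((a + i%:Z * d2 + (n - i)%:Z * d1 == x %[mod m%:Z])%Z : nat))%N.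
Proof.
rewrite !AT_countE.
have -> : (\sum_(i < n) row i x (n - i) = \sum_(i < n.+1) row i x (n - i))%N.
  by rewrite big_ord_recr /= subnn /ap_count big_ord0 addn0.
rewrite -big_split /=; apply: eq_bigr => i _.
by rewrite subSn -1?ltnS // /ap_count big_ord_recr.
Qed.

Lemma AT_count_second_difference n x :
  (N (m + (m + n)) x + N n x = N (m + n) x + N (m + n) x + m)%N.
Proof.
have rows_addm : (\sum_(i < m) row i x (m + (m + n) - i) =
                  m + \sum_(i < m) row i x (m + n - i))%N.
  rewrite (eq_bigr (fun i : 'I_m => 1 + row i x (m + n - i)))%N.
    by rewrite big_split sum_nat_const card_ord muln1.
  by move=> i _; rewrite -addnBA ?ap_count_addm // ltnW // ltn_addr.
by rewrite (AT_count_addm (m + n)) rows_addm (AT_count_addm n); ring.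
Qed.

Lemma AT_balanced_addm n :
  balanced n -> balanced (m + n) -> balanced (m + (m + n)).
Proof.
move=> bal_n bal_mn x y; apply: (@addIn (N n x)).
by rewrite AT_count_second_difference (bal_n x y) AT_count_second_difference (bal_mn x y).
Qed.

Lemma AT_balanced_mulmD r :
  balanced r -> balanced (m + r) -> forall p, balanced (p * m + r).
Proof.
move=> bal_r bal_mr p; suff : balanced (p * m + r) /\ balanced (p.+1 * m + r) by case.
elim: p => [|p [bal_p bal_next]]; first by rewrite mul1n.
split=> //; rewrite !mulSn -!addnA; apply: AT_balanced_addm => //.
by rewrite addnA -mulSn.
Qed.

Lemma AT_count_antidiagonal k n x : n.+1 = (k * m)%N -> N n.+1 x = (N n x + k)%N.
Proof.
move=> n1E; rewrite AT_count_succ.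
rewrite -(ap_count_mulm (a + n%:Z * d1) x m_gt0 diff_coprime k) -n1E.
congr addn; apply: eq_bigr => i _; rewrite -subzn -1?ltnS //.
by congr (_ == _); congr (_ %% _)%Z; ring.
Qed.

Lemma AT_balanced_pred k n : n.+1 = (k * m)%N -> balanced n.+1 -> balanced n.
Proof.
move=> n1E bal x y; have := bal x y.
by rewrite (AT_count_antidiagonal x n1E) (AT_count_antidiagonal y n1E) => /addIn.
Qed.

Section Square.

Variable x : int.

Definition cell_hit (i j : nat) : nat := (a + i%:Z * d2 + j%:Z * d1 == x %[mod m%:Z])%Z.

Lemma sum_cell_hit_row i : (\sum_(j < m) cell_hit i j)%N = 1%N.
Proof. exact: ap_count_period. Qed.

Lemma sum_cell_hit_col j : (\sum_(i < m) cell_hit i j)%N = 1%N.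
Proof.
rewrite -(ap_count_period (a + j%:Z * d1) x m_gt0 d2_coprime).
by apply: eq_bigr => i _; rewrite /cell_hit addrAC.
Qed.

Lemma sum_cell_hit_wrapped_diag k : (\sum_(i < m) cell_hit i ((k + (m - i)) %% m))%N = 1%N.
Proof.
rewrite -(ap_count_period (a + k%:Z * d1) x m_gt0 diff_coprime).
apply: eq_bigr => i _; rewrite /cell_hit; congr (_ == _).
rewrite -modz_nat -modzDmr modzMml modzDmr PoszD -subzn; last exact: ltnW.
have -> : a + i%:Z * d2 + (k%:Z + (m%:Z - i%:Z)) * d1 =
          d1 * m%:Z + (a + k%:Z * d1 + i%:Z * (d2 - d1)) by ring.
by rewrite modzMDl.
Qed.

Lemma sum_cell_hit_weighted :
  (\sum_(i < m) \sum_(j < m) cell_hit i j * (i + j) = \sum_(k < m) k + \sum_(k < m) k)%N.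
Proof.
have -> : (\sum_(i < m) \sum_(j < m) cell_hit i j * (i + j) =
           \sum_(i < m) \sum_(j < m) cell_hit i j * i +
           \sum_(i < m) \sum_(j < m) cell_hit i j * j)%N.
  rewrite -big_split; apply: eq_bigr => i _.
  by rewrite -big_split; apply: eq_bigr => j _; rewrite mulnDr.
congr addn; first by apply: eq_bigr => i _; rewrite -big_distrl /= sum_cell_hit_row mul1n.
by rewrite exchange_big; apply: eq_bigr => j _; rewrite -big_distrl /= sum_cell_hit_col mul1n.
Qed.

Lemma sum_cell_hit_weighted_mod :
  (\sum_(i < m) \sum_(j < m) cell_hit i j * ((i + j) %% m) = \sum_(k < m) k)%N.
Proof.
have row_rot (i : 'I_m) : (\sum_(j < m) cell_hit i j * ((i + j) %% m) =
    \sum_(k < m) cell_hit i ((k + (m - i)) %% m) * k)%N.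
  rewrite -[RHS](big_ord_rotmod _ i (fun k => cell_hit i ((k + (m - i)) %% m) * k)%N m_gt0).
  apply: eq_bigr => j _; rewrite modnDml.
  have -> : (i + j + (m - i) = j + m)%N by have := ltn_ord i; lia.
  by rewrite modnDr (modn_small (ltn_ord j)).
rewrite (eq_bigr _ (fun i _ => row_rot i)) exchange_big /=.
by apply: eq_bigr => k _; rewrite -big_distrl /= sum_cell_hit_wrapped_diag mul1n.
Qed.

Definition upper_cell_hits : nat := (\sum_(i < m) \sum_(j < m) cell_hit i j * (m <= i + j))%N.

Lemma AT_count_m_upper_cell_hits : (N m x + upper_cell_hits)%N = m.
Proof.
have -> : N m x = (\sum_(i < m) \sum_(j < m) cell_hit i j * (i + j < m))%N.
  apply: eq_bigr => i _.
  rewrite (big_ord_widen m (cell_hit i)) ?leq_subr // big_mkcond /=.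
  by apply: eq_bigr => j _; rewrite ltn_subRL; case: ltnP; rewrite ?muln1 ?muln0.
transitivity (\sum_(i < m) 1)%N; last by rewrite sum_nat_const card_ord muln1.
rewrite /upper_cell_hits -big_split; apply: eq_bigr => i _.
rewrite -(sum_cell_hit_row i) -big_split /=.
by apply: eq_bigr => j _; rewrite -mulnDr ltnNge; case: leqP; rewrite ?muln1.
Qed.

Lemma mul_upper_cell_hits : (m * upper_cell_hits)%N = (\sum_(k < m) k)%N.
Proof.
have weight_split (i j : 'I_m) :
    (i + j = (i + j) %% m + m * (m <= i + j))%N.
  case: leqP => [le_m|lt_m]; last by rewrite modn_small ?muln0 ?addn0.
  have lt_i := ltn_ord i; have lt_j := ltn_ord j.
  have -> : ((i + j) %% m = i + j - m)%N.
    by rewrite -[in LHS](subnK le_m) modnDr modn_small //; lia.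
  lia.
apply: (@addnI (\sum_(k < m) k)%N); rewrite -{1}sum_cell_hit_weighted_mod.
rewrite /upper_cell_hits big_distrr -big_split /=.
rewrite -[RHS]sum_cell_hit_weighted; apply: eq_bigr => i _.
rewrite big_distrr -big_split /=; apply: eq_bigr => j _.
by rewrite mulnCA -mulnDr -weight_split.
Qed.

End Square.

Lemma AT_balanced_m : balanced m.
Proof.
move=> x y.
have upper_eq : upper_cell_hits x = upper_cell_hits y.
  by apply/eqP; rewrite -(eqn_pmul2l m_gt0) !mul_upper_cell_hits.
by apply: (@addIn (upper_cell_hits x)); rewrite {2}upper_eq !AT_count_m_upper_cell_hits.
Qed.

Lemma AT_balanced_mulm p : balanced (p * m).
Proof.
rewrite -[(p * m)%N]addn0; apply: AT_balanced_mulmD.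
  by move=> x y; rewrite /AT_count !big_ord0.
by rewrite addn0; exact: AT_balanced_m.
Qed.

End Triangle.

Theorem theorem14 (m : nat) (a d1 d2 : int) :
  (0 < m)%N -> odd m ->
  coprimez d1 (m%:Z) -> coprimez d2 (m%:Z) -> coprimez (d2 - d1)%R (m%:Z) ->
  forall n : nat, (n %% m = 0 \/ n.+1 %% m = 0)%N -> AT_balanced m a d1 d2 n.
Proof.
move=> m_gt0 _ d1_cop d2_cop diff_cop n [n_mod | n1_mod].
  by rewrite (divn_eq n m) n_mod addn0; apply: AT_balanced_mulm.
have n1E : n.+1 = (n.+1 %/ m * m)%N by rewrite {1}(divn_eq n.+1 m) n1_mod addn0.
apply: (AT_balanced_pred m_gt0 diff_cop n1E).
by rewrite n1E; apply: AT_balanced_mulm.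
Qed.
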